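(* Let $T_2=\frac12\log\big(\det(W_\gamma)/\det(W_{\gamma^0})\big)$ and let $0<\underline\phi_n\le\bar\phi_n$. (a) Suppose that, for some $C_3>0$ and $\delta\ge0$, $\inf_{\gamma\in S_1}\lambda_-\big(\frac1nX_{\gamma\setminus\gamma^0}^T(I_n-P_{\gamma^0})X_{\gamma\setminus\gamma^0}\big)\ge C_3n^{-\delta}$. Then for every $\gamma\in S_1$ and all $c_1,\dots,c_p\in[\underline\phi_n,\bar\phi_n]$, $T_2\ge\frac12(|\gamma|-s_n)\log(1+C_3n^{1-\delta}\underline\phi_n)$. (b) Suppose $\gamma^0\ne\emptyset$ and $\varphi_{\max}(n)\le C_2$ for a constant $C_2>0$. Then for every $\gamma\in S_2$ and all $c_1,\dots,c_p\in[\underline\phi_n,\bar\phi_n]$, $T_2\ge-\frac12s_n\log(1+C_2n\bar\phi_n)$.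
   Context: $X$ is an $n\times p$ matrix with $X_\gamma^TX_\gamma$ invertible for every state vector $\gamma$; $\beta^0\in\mathbb R^p$. A state vector is $\gamma\in\{0,1\}^p$; $|\gamma|$ its number of ones; $X_\gamma$ the columns of $X$ indexed by $\{j:\gamma_j=1\}$. $\gamma^0_j=I(\beta^0_j\ne0)$, $s_n=|\gamma^0|$, $\emptyset$ the zero vector. $\gamma\setminus\gamma'$ has $j$-th entry $I(\gamma_j=1,\gamma'_j=0)$; $\gamma\subset\gamma'$ means $\gamma\setminus\gamma'=0$. $P_\gamma=X_\gamma(X_\gamma^TX_\gamma)^{-1}X_\gamma^T$, $P_\emptyset=0$. $S_1=\{\gamma:\gamma^0\subset\gamma,\gamma\neq\gamma^0\}$, $S_2=\{\gamma:\gamma^0\not\subset\gamma\}$. $\lambda_\pm$ are largest/smallest eigenvalues; $\varphi_{\max}(n)=\max_{\gamma\in S_2}\lambda_+\big(\frac1nX_{\gamma^0\setminus\gamma}^TX_{\gamma^0\setminus\gamma}\big)$. With hyperparameters $c_j>0$, $\Sigma=\mathrm{diag}(c_1,\dots,c_p)$, $\Sigma_\gamma$ its diagonal submatrix indexed by $\gamma$, $U_\gamma=\Sigma_\gamma^{-1}+X_\gamma^TX_\gamma$, $W_\gamma=\Sigma_\gamma^{1/2}U_\gamma\Sigma_\gamma^{1/2}$, with conventions $X_\emptyset=0$, $\Sigma_\emptyset=U_\emptyset=W_\emptyset=1$. *)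

From HB Require Import structures.
From Stdlib Require Import Reals Lra Classical ClassicalEpsilon
  FunctionalExtensionality PropExtensionality.
From mathcomp Require Import all_boot all_order all_algebra.

Set Implicit Arguments.
Unset Strict Implicit.
Unset Printing Implicit Defensive.

Definition Reqb (x y : R) : bool := if Req_EM_T x y then true else false.

Lemma Reqb_axiom : Equality.axiom Reqb.
Proof. by move=> x y; rewrite /Reqb; case: Req_EM_T => h; constructor. Qed.

HB.instance Definition _ := hasDecEq.Build R Reqb_axiom.

Definition Rfind (P : pred R) (n : nat) : option R :=
  match excluded_middle_informative (exists x, P x) with
  | left h => Some (proj1_sig (constructive_indefinite_description _ h))
  | right _ => None
  end.

Lemma Rfind_correct P n x : Rfind P n = Some x -> P x.
Proof.
rewrite /Rfind; case: excluded_middle_informative => // h [<-].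
exact: (proj2_sig (constructive_indefinite_description _ h)).
Qed.

Lemma Rfind_complete (P : pred R) : (exists x, P x) -> exists n, Rfind P n.
Proof.
move=> h; exists 0%N; rewrite /Rfind.
by case: excluded_middle_informative.
Qed.

Lemma Rfind_ext (P Q : pred R) : P =1 Q -> Rfind P =1 Rfind Q.
Proof. by move=> /functional_extensionality ->. Qed.

HB.instance Definition _ :=
  hasChoice.Build R Rfind_correct Rfind_complete Rfind_ext.

Lemma R_addA : ssrfun.associative Rplus. Proof. by move=> x y z; rewrite Rplus_assoc. Qed.
Lemma R_addC : ssrfun.commutative Rplus. Proof. exact: Rplus_comm. Qed.
Lemma R_add0 : ssrfun.left_id R0 Rplus. Proof. exact: Rplus_0_l. Qed.
Lemma R_addN : ssrfun.left_inverse R0 Ropp Rplus. Proof. exact: Rplus_opp_l. Qed.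

HB.instance Definition _ := GRing.isZmodule.Build R R_addA R_addC R_add0 R_addN.

Lemma R_mulA : ssrfun.associative Rmult. Proof. by move=> x y z; rewrite Rmult_assoc. Qed.
Lemma R_mulC : ssrfun.commutative Rmult. Proof. exact: Rmult_comm. Qed.
Lemma R_mul1 : ssrfun.left_id R1 Rmult. Proof. exact: Rmult_1_l. Qed.
Lemma R_mulDl : ssrfun.left_distributive Rmult Rplus.
Proof. by move=> x y z; rewrite Rmult_plus_distr_r. Qed.
Lemma R_one_neq0 : R1 != R0.
Proof. by apply/eqP; exact: R1_neq_R0. Qed.

HB.instance Definition _ :=
  GRing.Zmodule_isComNzRing.Build R R_mulA R_mulC R_mul1 R_mulDl R_one_neq0.

Lemma R_mulVf (x : R) : x != R0 -> Rmult (Rinv x) x = R1.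
Proof. by move=> /eqP h; exact: Rinv_l. Qed.
Lemma R_inv0 : Rinv R0 = R0. Proof. exact: Rinv_0. Qed.

HB.instance Definition _ := GRing.ComNzRing_isField.Build R R_mulVf R_inv0.

Local Open Scope ring_scope.

(* A state vector gamma in {0,1}^p is represented by the set {j : gamma_j = 1}
   : {set 'I_p}.  |gamma| = #|gamma|, gamma \ gamma' = gamma :\: gamma',
   gamma subset gamma' = gamma \subset gamma', empty vector = set0. *)

Definition gamma0 (p : nat) (beta0 : 'I_p -> R) : {set 'I_p} :=
  [set j | beta0 j != 0].

(* X_gamma : the columns of X indexed by gamma, in increasing order
   (n x 0 matrix, i.e. "X_emptyset = 0", when gamma is empty). *)
Definition Xsub (n p : nat) (X : 'M[R]_(n, p)) (g : {set 'I_p})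
  : 'M[R]_(n, #|g|) :=
  colsub (fun k : 'I_#|g| => enum_val k) X.

Definition Pproj (n p : nat) (X : 'M[R]_(n, p)) (g : {set 'I_p}) : 'M[R]_n :=
  Xsub X g *m invmx ((Xsub X g)^T *m Xsub X g) *m (Xsub X g)^T.

Definition Sig (p : nat) (c : 'I_p -> R) (g : {set 'I_p}) : 'M[R]_#|g| :=
  diag_mx (\row_(k < #|g|) c (enum_val k)).
Definition Sig_half (p : nat) (c : 'I_p -> R) (g : {set 'I_p}) : 'M[R]_#|g| :=
  diag_mx (\row_(k < #|g|) sqrt (c (enum_val k))).

Definition Umat (n p : nat) (X : 'M[R]_(n, p)) (c : 'I_p -> R)
  (g : {set 'I_p}) : 'M[R]_#|g| :=
  invmx (Sig c g) + (Xsub X g)^T *m Xsub X g.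

(* W_gamma = Sigma_gamma^{1/2} U_gamma Sigma_gamma^{1/2}
   (a 0 x 0 matrix, with determinant 1, when gamma is empty) *)
Definition Wmat (n p : nat) (X : 'M[R]_(n, p)) (c : 'I_p -> R)
  (g : {set 'I_p}) : 'M[R]_#|g| :=
  Sig_half c g *m Umat X c g *m Sig_half c g.

Definition T2 (n p : nat) (X : 'M[R]_(n, p)) (c : 'I_p -> R)
  (g g0 : {set 'I_p}) : R :=
  Rmult (Rinv 2) (ln (Rdiv (\det (Wmat X c g)) (\det (Wmat X c g0)))).

Definition Mres (n p : nat) (X : 'M[R]_(n, p)) (g g0 : {set 'I_p})
  : 'M[R]_#|g :\: g0| :=
  (n%:R)^-1 *: ((Xsub X (g :\: g0))^T *m (1%:M - Pproj X g0) *m Xsub X (g :\: g0)).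

Definition Mgram (n p : nat) (X : 'M[R]_(n, p)) (g g0 : {set 'I_p})
  : 'M[R]_#|g0 :\: g| :=
  (n%:R)^-1 *: ((Xsub X (g0 :\: g))^T *m Xsub X (g0 :\: g)).

Definition inS1 (p : nat) (g0 g : {set 'I_p}) : bool := (g0 \subset g) && (g != g0).
Definition inS2 (p : nat) (g0 g : {set 'I_p}) : bool := ~~ (g0 \subset g).

(* Put F_g = I_n + X_g Sigma_g X_g^T.  By Sylvester's identity
   det (I + A B) = det (I + B A), det W_g = det (Sigma_g U_g) = det F_g, and
   F_g is additive in g: F_(A u D) = F_A + X_D Sigma_D X_D^T for disjoint
   A, D, whence det F_(A u D) = det F_A * det (I + Sigma_D X_D^T F_A^-1 X_D).
   (a) For g0 in g this is the whole ratio, and as quadratic forms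
       F_g0^-1 >= I - P_g0, so X_D^T F_g0^-1 X_D >= n Mres >= n C3 n^-delta.
   (b) Both F_g and F_g0 extend F_(g n g0); the factor for g \ g0 is >= 1 and
       the one for g0 \ g is <= (1 + phiu n C2)^|g0 \ g|, using 0 <= F^-1 <= I.
   Determinants are bounded through forms: mu |x|^2 <= x M x^T <= nu |x|^2
   gives mu^k <= det M <= nu^k (Schur-complement induction), and a bound on
   the real eigenvalues of a symmetric matrix bounds its form (a supremum
   argument using the completeness of R). *)

From HB Require Import structures.
From Stdlib Require Import Reals Lra.
From mathcomp Require Import all_boot all_order all_algebra.
From mathcomp.algebra_tactics Require Import ring lra.

Set Implicit Arguments.
Unset Strict Implicit.
Unset Printing Implicit Defensive.
Import Order.TTheory GRing.Theory Num.Theory.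

Section RealOrder.
Local Open Scope R_scope.

Definition Rleb (x y : R) : bool := if Rle_dec x y is left _ then true else false.
Definition Rltb (x y : R) : bool := Rleb x y && (x != y).

Lemma RlebP x y : reflect (Rle x y) (Rleb x y).
Proof. by rewrite /Rleb; apply: (iffP idP); case: Rle_dec. Qed.

Lemma RltbP x y : reflect (Rlt x y) (Rltb x y).
Proof.
rewrite /Rltb /Rleb; apply: (iffP idP); case: Rle_dec => //=.
- by case=> // -> /eqP.
- by move=> _ xy; apply/eqP/Rlt_not_eq.
- by move=> nxy /Rlt_le.
Qed.

Lemma Rleb_norm_add x y : Rleb (Rabs (x + y)) (Rabs x + Rabs y).
Proof. exact/RlebP/Rabs_triang. Qed.

Lemma Rltb_add_gt0 x y : Rltb 0 x -> Rltb 0 y -> Rltb 0 (x + y).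
Proof. by move=> /RltbP hx /RltbP hy; apply/RltbP/Rplus_lt_0_compat. Qed.

Lemma Rabs_eq0 x : Rabs x = 0 -> x = 0.
Proof. by case: (Req_dec x 0) => // /Rabs_no_R0. Qed.

Lemma Rleb_ge0_total x y : Rleb 0 x -> Rleb 0 y -> Rleb x y || Rleb y x.
Proof.
by move=> _ _; case: (Rle_lt_dec x y) => [/RlebP -> | /Rlt_le /RlebP ->];
  rewrite ?orbT.
Qed.

Lemma Rleb_def x y : Rleb x y = (Rabs (y - x) == y - x).
Proof.
apply/RlebP/eqP => [/Rle_minus h | h].
- by apply: Rabs_pos_eq; rewrite -Ropp_minus_distr; Lra.lra.
- by have := Rabs_pos (y - x); rewrite h => hxy; Lra.lra.
Qed.

Lemma Rltb_def x y : Rltb x y = (y != x) && Rleb x y.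
Proof. by rewrite /Rltb andbC eq_sym. Qed.

End RealOrder.

HB.instance Definition _ := Num.IntegralDomain_isNumRing.Build R
  Rleb_norm_add Rltb_add_gt0 Rabs_eq0 Rleb_ge0_total Rabs_mult Rleb_def Rltb_def.

Lemma RleP x y : reflect (Rle x y) (x <= y)%R. Proof. exact: RlebP. Qed.
Lemma RltP x y : reflect (Rlt x y) (x < y)%R. Proof. exact: RltbP. Qed.

Lemma R_total : total (<=%O : rel R).
Proof.
by move=> x y; case: (Rle_lt_dec x y) => [/RleP -> | /Rlt_le /RleP ->];
  rewrite ?orbT.
Qed.

HB.instance Definition _ := Order.POrder_isTotal.Build _ R R_total.

Local Open Scope ring_scope.

Section QuadraticForms.
Variable F : realFieldType.

Definition bf k (A : 'M[F]_k) (x y : 'rV[F]_k) : F := (x *m A *m y^T) 0 0.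
Definition qf k (A : 'M[F]_k) (x : 'rV[F]_k) : F := bf A x x.
Definition nrm k (x : 'rV[F]_k) : F := (x *m x^T) 0 0.

Lemma nrmE k (x : 'rV[F]_k) : nrm x = \sum_i x 0 i ^+ 2.
Proof. by rewrite /nrm mxE; apply: eq_bigr => i _; rewrite mxE expr2. Qed.

Lemma nrm_ge0 k (x : 'rV[F]_k) : 0 <= nrm x.
Proof. by rewrite nrmE sumr_ge0 // => i _; exact: sqr_ge0. Qed.

Lemma nrm_eq0 k (x : 'rV[F]_k) : nrm x = 0 -> x = 0.
Proof.
rewrite nrmE => /psumr_eq0P x0; apply/matrixP => i j.
rewrite ord1 mxE; apply/eqP; rewrite -sqrf_eq0; apply/eqP.
by apply: x0 => // l _; exact: sqr_ge0.
Qed.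

Lemma nrm_bf k (x : 'rV[F]_k) : nrm x = bf 1%:M x x.
Proof. by rewrite /bf mulmx1. Qed.

Lemma qf1 k (x : 'rV[F]_k) : qf 1%:M x = nrm x.
Proof. by rewrite /qf -nrm_bf. Qed.

Lemma qf0 k (A : 'M[F]_k) : qf A 0 = 0.
Proof. by rewrite /qf /bf !mul0mx mxE. Qed.

Lemma bfC k (A : 'M[F]_k) x y : A^T = A -> bf A x y = bf A y x.
Proof.
move=> AT; rewrite /bf; transitivity ((x *m A *m y^T)^T 0 0); first by rewrite [RHS]mxE.
by rewrite !trmx_mul trmxK AT mulmxA.
Qed.

Lemma bfDl k (A : 'M[F]_k) x y z : bf A (x + y) z = bf A x z + bf A y z.
Proof. by rewrite /bf !mulmxDl mxE. Qed.
Lemma bfDr k (A : 'M[F]_k) x y z : bf A z (x + y) = bf A z x + bf A z y.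
Proof. by rewrite /bf linearD /= !mulmxDr mxE. Qed.
Lemma bfZl k (A : 'M[F]_k) a x z : bf A (a *: x) z = a * bf A x z.
Proof. by rewrite /bf -!scalemxAl mxE. Qed.
Lemma bfZr k (A : 'M[F]_k) a x z : bf A z (a *: x) = a * bf A z x.
Proof. by rewrite /bf linearZ /= -!scalemxAr mxE. Qed.

Lemma qf_add k (A B : 'M[F]_k) x : qf (A + B) x = qf A x + qf B x.
Proof. by rewrite /qf /bf mulmxDr mulmxDl mxE. Qed.

Lemma qf_scale k a (A : 'M[F]_k) x : qf (a *: A) x = a * qf A x.
Proof. by rewrite /qf /bf -scalemxAr -scalemxAl mxE. Qed.

Lemma qf_opp k (A : 'M[F]_k) x : qf (- A) x = - qf A x.
Proof. by rewrite -scaleN1r qf_scale mulN1r. Qed.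

Lemma qf_shift k (A : 'M[F]_k) t x : qf (A - t%:M) x = qf A x - t * nrm x.
Proof. by rewrite qf_add qf_opp -scalemx1 qf_scale qf1. Qed.

Lemma qf_diag k (d : 'rV[F]_k) x : qf (diag_mx d) x = \sum_i d 0 i * x 0 i ^+ 2.
Proof.
rewrite /qf /bf mul_mx_diag mxE; apply: eq_bigr => i _; rewrite !mxE; ring.
Qed.

Lemma qf_conj m k (A : 'M[F]_k) (B : 'M[F]_(m, k)) x :
  qf (B *m A *m B^T) x = qf A (x *m B).
Proof. by rewrite /qf /bf trmx_mul !mulmxA. Qed.

Lemma qf_line k (A : 'M[F]_k) x y t :
  qf A (x + t *: y) = qf A x + t * (bf A x y + bf A y x) + t ^+ 2 * qf A y.
Proof. by rewrite /qf bfDl !bfDr !bfZl !bfZr; ring. Qed.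

Lemma bf_CauchySchwarz k (A : 'M[F]_k) x y : A^T = A ->
  (forall z, 0 <= qf A z) -> bf A x y ^+ 2 <= qf A x * qf A y.
Proof.
move=> AT psd; set a := qf A x; set b := bf A x y; set c := qf A y.
have line t : 0 <= a + 2 * t * b + t ^+ 2 * c.
  by have := psd (x + t *: y); rewrite qf_line (bfC y x AT) -/a -/b -/c; lra.
have a0 : 0 <= a := psd x; have c0 : 0 <= c := psd y.
have [c_eq0|c_neq0] := eqVneq c 0.
  have [b_eq0|b_neq0] := eqVneq b 0; first by rewrite b_eq0 c_eq0; lra.
  have := line (- (a + 1) / (2 * b)).
  have -> : 2 * (- (a + 1) / (2 * b)) * b = - (a + 1) by field.
  by rewrite c_eq0; lra.
have c_gt0 : 0 < c by rewrite lt_def c_neq0 c0.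
have := line (- b / c).
have -> : 2 * (- b / c) * b = - 2 * (b ^+ 2 / c) by field.
have -> : (- b / c) ^+ 2 * c = b ^+ 2 / c by field.
by move=> h; rewrite -ler_pdivrMr //; lra.
Qed.

Lemma bfE k (A : 'M[F]_k) x y :
  bf A x y = \sum_j \sum_i x 0 i * A i j * y 0 j.
Proof.
by rewrite /bf mxE; apply: eq_bigr => j _; rewrite !mxE big_distrl.
Qed.

Lemma sqr_coord_le_nrm k (x : 'rV[F]_k) i : `|x 0 i| ^+ 2 <= nrm x.
Proof.
rewrite real_normK ?num_real // nrmE (bigD1 i) //= lerDl.
by rewrite sumr_ge0 // => j _; exact: sqr_ge0.
Qed.

Lemma qf_bounded k (A : 'M[F]_k) :
  exists2 K, 0 <= K & forall x, `|qf A x| <= K * nrm x.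
Proof.
exists (\sum_j \sum_i `|A i j|); first by do 2!apply: sumr_ge0 => ? _.
move=> x; rewrite /qf bfE mulr_suml.
apply: le_trans (ler_norm_sum _ _ _) _; apply: ler_sum => j _.
rewrite mulr_suml; apply: le_trans (ler_norm_sum _ _ _) _.
apply: ler_sum => i _; rewrite !normrM mulrAC -mulrA mulrA mulrC ler_wpM2l //.
have hi := sqr_coord_le_nrm x i; have hj := sqr_coord_le_nrm x j.
have := sqr_ge0 (`|x 0 i| - `|x 0 j|); rewrite !expr2 in hi hj *; nra.
Qed.

End QuadraticForms.

(* Determinants of symmetric matrices are controlled by their forms: the
   Schur complement of the top-left entry inherits the bounds of the form,
   which gives [mu ^+ k <= det M <= nu ^+ k] by induction on the size. *)

Section Determinants.
Variable F : realFieldType.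

Lemma det_id_addmul m k (A : 'M[F]_(m, k)) (B : 'M[F]_(k, m)) :
  \det (1%:M + A *m B) = \det (1%:M + B *m A).
Proof.
have lower : block_mx 1%:M (- A) B 1%:M =
    block_mx 1%:M 0 B 1%:M *m block_mx 1%:M (- A) 0 (1%:M + B *m A).
  rewrite mulmx_block ?mul1mx ?mul0mx ?mulmx0 ?addr0 ?add0r ?mulmxN ?mulmx1.
  by rewrite addrC addrK.
have upper : block_mx 1%:M (- A) B 1%:M =
    block_mx (1%:M + A *m B) (- A) 0 1%:M *m block_mx 1%:M 0 B 1%:M.
  rewrite mulmx_block ?mul1mx ?mul0mx ?mulmx0 ?mulmx1 ?add0r ?addr0.
  by rewrite mulNmx addrK.
have := congr1 determinant (etrans (esym lower) upper).
rewrite !det_mulmx (det_lblock (1%:M : 'M[F]_m)) (det_ublock (1%:M : 'M[F]_m)).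
by rewrite (det_ublock (1%:M + A *m B)) !det1 !mul1r !mulr1.
Qed.

Section SchurStep.
Variables (k : nat) (M : 'M[F]_(1 + k)).
Hypothesis M_sym : M^T = M.

Let a : F := ulsubmx M 0 0.
Let r := ursubmx M.
Let M' := drsubmx M.

Lemma M_block : M = block_mx a%:M r r^T M'.
Proof.
have -> : a%:M = ulsubmx M.
  by apply/matrixP => i j; rewrite !ord1 mxE eqxx mulr1n.
by rewrite /r trmx_ursub M_sym submxK.
Qed.

Definition schur := M' - a^-1 *: (r^T *m r).

Lemma schur_sym : schur^T = schur.
Proof.
by rewrite /schur linearB /= linearZ /= trmx_mul trmxK /M' trmx_drsub M_sym.
Qed.

Lemma det_schur : a != 0 -> \det M = a * \det schur.
Proof.
move=> a_neq0; rewrite {1}M_block.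
have -> : block_mx a%:M r r^T M' =
    block_mx 1%:M 0 (a^-1 *: r^T) 1%:M *m block_mx a%:M r 0 schur.
  rewrite mulmx_block ?mul1mx ?mul0mx ?mulmx0 ?addr0 ?add0r.
  by rewrite mul_mx_scalar scalerA divff // scale1r /schur -scalemxAl addrC subrK.
rewrite det_mulmx (det_lblock (1%:M : 'M[F]_1)) (det_ublock (a%:M : 'M[F]_1)).
by rewrite !det1 !mul1r det_scalar1.
Qed.

Let rho (y : 'rV[F]_k) := (r *m y^T) 0 0.

Lemma qf_block s y : qf M (row_mx s%:M y) = a * s ^+ 2 + 2 * s * rho y + qf M' y.
Proof.
rewrite /qf /bf {1}M_block mul_row_block tr_row_mx mul_row_col tr_scalar_mx.
rewrite !mul_scalar_mx mul_mx_scalar !mulmxDl -scalemxAl !mxE eqxx mulr1n.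
have -> : \sum_j y 0 j * r^T j 0 = rho y.
  by rewrite /rho mxE; apply: eq_bigr => j _; rewrite !mxE mulrC.
have -> : \sum_j r 0 j * y^T j 0 = rho y by rewrite /rho mxE.
have -> : \sum_j (y *m M') 0 j * y^T j 0 = qf M' y by rewrite /qf /bf mxE.
ring.
Qed.

Lemma nrm_block (s : F) (y : 'rV[F]_k) : nrm (row_mx s%:M y) = s ^+ 2 + nrm y.
Proof.
rewrite /nrm tr_row_mx mul_row_col tr_scalar_mx mul_scalar_mx.
by rewrite [in LHS]mxE !mxE eqxx mulr1n expr2.
Qed.

Lemma qf_schur y : qf schur y = qf M' y - a^-1 * rho y ^+ 2.
Proof.
rewrite /schur qf_add qf_opp qf_scale; congr (_ - _ * _).
rewrite /qf /bf !mulmxA -(mulmxA (y *m r^T)) mxE big_ord1 expr2 /rho.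
congr (_ * _); transitivity ((y *m r^T)^T 0 0); first by rewrite [RHS]mxE.
by rewrite trmx_mul trmxK.
Qed.

Lemma schur_bounds mu nu : 0 < mu ->
    (forall x, mu * nrm x <= qf M x) -> (forall x, qf M x <= nu * nrm x) ->
  [/\ mu <= a <= nu, forall y, mu * nrm y <= qf schur y
    & forall y, qf schur y <= nu * nrm y].
Proof.
move=> mu_gt0 lo up.
have rho0 : rho 0 = 0 by rewrite /rho trmx0 mulmx0 mxE.
have a_bounds : mu <= a <= nu.
  have := lo (row_mx 1%:M 0); have := up (row_mx 1%:M 0).
  rewrite qf_block nrm_block rho0 qf0 /nrm mul0mx mxE expr1n.
  by move=> h1 h2; apply/andP; split; lra.
have a_gt0 : 0 < a by case/andP: a_bounds => ha _; lra.
split=> // y; rewrite qf_schur.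
- have := lo (row_mx (- rho y / a)%:M y); rewrite qf_block nrm_block.
  have -> : a * (- rho y / a) ^+ 2 + 2 * (- rho y / a) * rho y
    = - (a^-1 * rho y ^+ 2) by field; rewrite gt_eqF.
  have : 0 <= mu * (- rho y / a) ^+ 2 by rewrite mulr_ge0 ?sqr_ge0 ?ltW.
  lra.
- have := up (row_mx 0%:M y); rewrite qf_block nrm_block expr0n /= ?mul0r ?mulr0.
  have : 0 <= a^-1 * rho y ^+ 2 by rewrite mulr_ge0 ?sqr_ge0 ?invr_ge0 ?ltW.
  lra.
Qed.

End SchurStep.

Lemma det_bounds k (M : 'M[F]_k) mu nu : M^T = M -> 0 < mu ->
    (forall x, mu * nrm x <= qf M x) -> (forall x, qf M x <= nu * nrm x) ->
  mu ^+ k <= \det M <= nu ^+ k.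
Proof.
elim: k M => [|k IH] M M_sym mu_gt0 lo up; first by rewrite det_mx00 !expr0 lexx.
have [/andP[a_lo a_up] slo sup] := schur_bounds M_sym mu_gt0 lo up.
have /andP[IHlo IHup] := IH _ (schur_sym M_sym) mu_gt0 slo sup.
have mu_k : 0 <= mu ^+ k by rewrite exprn_ge0 ?ltW.
rewrite (det_schur M_sym) ?gt_eqF ?(lt_le_trans mu_gt0) // !exprS.
by apply/andP; split; apply: ler_pM => //; lra.
Qed.

Lemma psd_unit_coercive k (B : 'M[F]_k) : B^T = B ->
    (forall z, 0 <= qf B z) -> B \in unitmx ->
  exists2 e, 0 < e & forall x, e * nrm x <= qf B x.
Proof.
move=> B_sym psd B_unit; have [K K_ge0 HK] := qf_bounded (invmx B).
exists (K + 1)^-1; first by rewrite invr_gt0; lra.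
move=> x; set z := x *m invmx B.
have xE : x = z *m B by rewrite /z -mulmxA mulVmx // mulmx1.
have nrmE : nrm x = bf B z x by rewrite /nrm /bf -xE.
have qfE : qf B z = qf (invmx B) x.
  by rewrite /qf /bf -xE /z trmx_mul trmx_inv B_sym mulmxA.
have := bf_CauchySchwarz z x B_sym psd; rewrite -nrmE qfE.
have := psd x; have := nrm_ge0 x; have := HK x.
set N := nrm x; set Q := qf B x; set Q' := qf (invmx B) x.
move=> /(le_trans (ler_norm _)) Q'_le N_ge0 Q_ge0 CS.
have NQ : N ^+ 2 <= K * N * Q by apply: le_trans CS _; apply: ler_wpM2r.
rewrite ler_pdivrMl; last by lra.
have [->|N_neq0] := eqVneq N 0; first by rewrite mulr_ge0 //; lra.
have N_gt0 : 0 < N by rewrite lt_def N_neq0.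
have : N <= K * Q by rewrite -(ler_pM2l N_gt0); rewrite expr2 in NQ; lra.
nra.
Qed.

End Determinants.

(* The largest [t <= 0] with
   [qf B >= t * nrm] (a supremum, by completeness of R) must be 0: otherwise
   [B - t] would be positive semidefinite and invertible, hence coercive, and
   [t] could be increased. *)

Lemma eigenvalue_lower_bound k (M : 'M[R]_k) (lam : R) : M^T = M ->
    (forall a, eigenvalue M a -> lam <= a) ->
  forall x, lam * nrm x <= qf M x.
Proof.
move=> M_sym eig_lb; set B := M - lam%:M.
have B_sym : B^T = B by rewrite /B linearB /= tr_scalar_mx M_sym.
suff psd : forall x, 0 <= qf B x.
  by move=> x; have := psd x; rewrite /B qf_shift subr_ge0.
pose E t := t <= 0 /\ forall x, t * nrm x <= qf B x.
have [K K_ge0 HK] := qf_bounded B.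
have E_bound : bound E by exists 0%R => t [/RleP].
have E_inhabited : exists t, E t.
  exists (- K); split=> [|y]; first by rewrite oppr_le0.
  by have := HK y; rewrite ler_norml mulNr => /andP[].
have [ts [ts_ub ts_lub]] := completeness E E_bound E_inhabited.
have ts_le0 : ts <= 0 by apply/RleP/ts_lub => t [/RleP].
have ts_lb y : ts * nrm y <= qf B y.
  have [N0|N_neq0] := eqVneq (nrm y) 0.
    by rewrite N0 mulr0 (nrm_eq0 N0) qf0.
  have N_gt0 : 0 < nrm y by rewrite lt_def N_neq0 nrm_ge0.
  rewrite -ler_pdivlMr //; apply/RleP/ts_lub => t [_ Ht].
  by apply/RleP; rewrite ler_pdivlMr.
have [ts_lt0|] := ltP ts 0; last first.
  move=> ts_ge0 y; have := ts_lb y.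
  have -> : ts = 0 by apply/eqP; rewrite eq_le ts_le0.
  by rewrite mul0r.
set C := B - ts%:M.
have C_sym : C^T = C by rewrite /C linearB /= tr_scalar_mx B_sym.
have C_psd z : 0 <= qf C z by rewrite /C qf_shift subr_ge0.
have C_unit : C \in unitmx.
  have -> : C = M - (lam + ts)%:M by rewrite /C /B raddfD /= opprD addrA.
  have : ~~ eigenvalue M (lam + ts) by apply/negP => /eig_lb; lra.
  by rewrite /eigenvalue /eigenspace negbK kermx_eq0 row_free_unit.
have [e e_gt0 He] := psd_unit_coercive C_sym C_psd C_unit.
have C_lb y : (ts + e) * nrm y <= qf B y.
  by have := He y; rewrite /C qf_shift mulrDl; lra.
have [e_small|e_large] := leP e (- ts).
  have /ts_ub/RleP : E (ts + e) by split; [lra | exact: C_lb].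
  lra.
have /ts_ub/RleP : E 0.
  split=> // y; have := C_lb y; have := nrm_ge0 y; rewrite mul0r; nra.
lra.
Qed.

(* The upper bound, applying the lower bound to [- M]. *)
Lemma eigenvalue_upper_bound k (M : 'M[R]_k) (C : R) : M^T = M ->
    (forall a, eigenvalue M a -> a <= C) ->
  forall x, qf M x <= C * nrm x.
Proof.
move=> M_sym eig_ub x; suff : - C * nrm x <= qf (- M) x by rewrite qf_opp; lra.
apply: eigenvalue_lower_bound => [|a /eigenvalueP[v va v_neq0]].
  by rewrite linearN /= M_sym.
suff : - a <= C by lra.
by apply: eig_ub; apply/eigenvalueP; exists v; rewrite // scaleNr -va mulmxN opprK.
Qed.

Lemma Pproj_sym n p (X : 'M[R]_(n, p)) g : (Pproj X g)^T = Pproj X g.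
Proof. by rewrite /Pproj !trmx_mul trmxK trmx_inv trmx_mul trmxK !mulmxA. Qed.

Lemma Mres_sym n p (X : 'M[R]_(n, p)) g g0 : (Mres X g g0)^T = Mres X g g0.
Proof.
by rewrite /Mres linearZ /= !trmx_mul trmxK linearB /= trmx1 Pproj_sym !mulmxA.
Qed.

Lemma Mgram_sym n p (X : 'M[R]_(n, p)) g g0 : (Mgram X g g0)^T = Mgram X g g0.
Proof. by rewrite /Mgram linearZ /= trmx_mul trmxK. Qed.

(* A normalised Gram-type matrix [n^-1 B^T A B] has the form of [A] at
   [y B^T], up to the factor [n] (both sides vanish when [n = 0]). *)
Lemma qf_normalized n k (A : 'M[R]_n) (B : 'M[R]_(n, k)) y :
  qf A (y *m B^T) = n%:R * qf ((n%:R)^-1 *: (B^T *m A *m B)) y.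
Proof.
have [n0|n_gt0] := posnP n.
  have -> : (n%:R : R) = 0 by rewrite n0.
  rewrite mul0r /qf /bf mxE big1 // => i _.
  by have := leq_trans (ltn_ord i) (eq_leq n0).
rewrite qf_scale mulrA mulfV ?mul1r ?pnatr_eq0 -?lt0n //.
by rewrite -qf_conj trmxK.
Qed.

Section Model.
Variables (n p : nat) (X : 'M[R]_(n, p)) (c : 'I_p -> R) (phil phiu : R).
Hypothesis phil_gt0 : 0 < phil.
Hypothesis c_bounds : forall j, phil <= c j <= phiu.

Lemma c_gt0 j : 0 < c j.
Proof. by case/andP: (c_bounds j) => /(lt_le_trans phil_gt0). Qed.

Definition XSX (g : {set 'I_p}) : 'M[R]_n := Xsub X g *m Sig c g *m (Xsub X g)^T.
Definition Fmat (g : {set 'I_p}) : 'M[R]_n := 1%:M + XSX g.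

(* [X_g Sigma_g X_g^T] as a sum of rank-one terms, hence additive in [g]. *)
Lemma XSX_sum g : XSX g = \sum_(j in g) c j *: (col j X *m (col j X)^T).
Proof.
apply/matrixP => i i'; rewrite /XSX /Sig mul_mx_diag summxE mxE.
rewrite (big_enum_val (fun j => (c j *: (col j X *m (col j X)^T)) i i')) /=.
by apply: eq_bigr => k _; rewrite !mxE big_ord1 !mxE; ring.
Qed.

Lemma XSX_split g A : XSX g = XSX (g :&: A) + XSX (g :\: A).
Proof. by rewrite !XSX_sum (big_setID A). Qed.

Lemma Sig_sym g : (Sig c g)^T = Sig c g. Proof. exact: tr_diag_mx. Qed.
Lemma Sig_half_sym g : (Sig_half c g)^T = Sig_half c g. Proof. exact: tr_diag_mx. Qed.

Lemma Sig_half_sqr g : Sig_half c g *m Sig_half c g = Sig c g.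
Proof.
rewrite /Sig_half /Sig mulmx_diag; congr diag_mx; apply/matrixP => i j.
by rewrite !mxE; apply/sqrt_sqrt/RleP/ltW/c_gt0.
Qed.

Lemma Sig_unit g : Sig c g \in unitmx.
Proof.
rewrite unitmxE unitfE /Sig det_diag; apply: lt0r_neq0.
by apply: prodr_gt0 => i _; rewrite mxE c_gt0.
Qed.

Lemma XSX_sym g : (XSX g)^T = XSX g.
Proof. by rewrite /XSX !trmx_mul trmxK Sig_sym mulmxA. Qed.

Lemma Fmat_sym g : (Fmat g)^T = Fmat g.
Proof. by rewrite /Fmat linearD /= trmx1 XSX_sym. Qed.

Lemma qf_Sig g w : phil * nrm w <= qf (Sig c g) w <= phiu * nrm w.
Proof.
rewrite /Sig qf_diag nrmE !mulr_sumr.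
apply/andP; split; apply: ler_sum => i _; rewrite mxE;
  by case/andP: (c_bounds (enum_val i)) => lo up; rewrite ler_wpM2r ?sqr_ge0.
Qed.

Lemma qf_XSX_ge0 g v : 0 <= qf (XSX g) v.
Proof.
rewrite /XSX qf_conj; case/andP: (qf_Sig (v *m Xsub X g)) => + _.
by apply: le_trans; rewrite mulr_ge0 ?nrm_ge0 ?ltW.
Qed.

Lemma Fmat_lb g v : nrm v <= qf (Fmat g) v.
Proof. by rewrite /Fmat qf_add qf1 lerDl qf_XSX_ge0. Qed.

(* [F_g >= I], so [det F_g >= 1]; in particular [F_g] is invertible. *)
Lemma Fmat_det_ge1 g : 1 <= \det (Fmat g).
Proof.
have [K _ HK] := qf_bounded (Fmat g).
have lo v : 1 * nrm v <= qf (Fmat g) v by rewrite mul1r Fmat_lb.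
have /andP[] := det_bounds (Fmat_sym g) ltr01 lo (fun v => le_trans (ler_norm _) (HK v)).
by rewrite expr1n.
Qed.

Lemma Fmat_det_neq0 g : \det (Fmat g) != 0.
Proof. by apply: contraTneq (Fmat_det_ge1 g) => ->; rewrite ler10. Qed.

Lemma Fmat_unit g : Fmat g \in unitmx.
Proof. by rewrite unitmxE unitfE Fmat_det_neq0. Qed.

(* [det W_g = det (Sigma_g U_g) = det F_g] by Sylvester's identity. *)
Lemma det_Wmat g : \det (Wmat X c g) = \det (Fmat g).
Proof.
have -> : \det (Wmat X c g) = \det (Sig c g *m Umat X c g).
  by rewrite /Wmat !det_mulmx -Sig_half_sqr det_mulmx; ring.
by rewrite /Umat mulmxDr mulmxV ?Sig_unit // mulmxA det_id_addmul /Fmat /XSX mulmxA.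
Qed.

Lemma invF_sym g : (invmx (Fmat g))^T = invmx (Fmat g).
Proof. by rewrite trmx_inv Fmat_sym. Qed.

Lemma qf_invF_bounds g v : 0 <= qf (invmx (Fmat g)) v <= nrm v.
Proof.
set z := v *m invmx (Fmat g).
have vE : v = z *m Fmat g by rewrite /z -mulmxA mulVmx ?Fmat_unit // mulmx1.
have qfE : qf (invmx (Fmat g)) v = nrm z + qf (XSX g) z.
  have -> : qf (invmx (Fmat g)) v = qf (Fmat g) z.
    by rewrite /qf /bf {2}vE trmx_mul Fmat_sym mulmxA.
  by rewrite /Fmat qf_add qf1.
have nrmE : nrm v = nrm z + 2 * qf (XSX g) z + nrm (z *m XSX g).
  rewrite vE /Fmat mulmxDr mulmx1 !nrm_bf bfDl !bfDr -!nrm_bf.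
  have -> : bf 1%:M z (z *m XSX g) = qf (XSX g) z.
    by rewrite /bf /qf mulmx1 trmx_mul XSX_sym mulmxA.
  have -> : bf 1%:M (z *m XSX g) z = qf (XSX g) z by rewrite /bf /qf mulmx1.
  ring.
rewrite qfE nrmE; have := qf_XSX_ge0 g z; have := nrm_ge0 z.
have := nrm_ge0 (z *m XSX g); move=> *; apply/andP; split; lra.
Qed.

(* [I - P_g0 <= F_g0^-1] as forms: on the kernel of [X_g0^T] the two agree,
   and on the range of [X_g0] the left side vanishes. *)
Lemma proj_le_invF g0 : (Xsub X g0)^T *m Xsub X g0 \in unitmx ->
  forall v, qf (1%:M - Pproj X g0) v <= qf (invmx (Fmat g0)) v.
Proof.
move=> gram_unit v; set X0 := Xsub X g0; set Fi := invmx (Fmat g0).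
set u := v *m Pproj X g0; set w := v - u.
have w_orth : w *m X0 = 0.
  by rewrite /w /u mulmxBl /Pproj -/X0 -!mulmxA mulVmx // mulmx1 subrr.
have wF : w *m Fi = w.
  have wF : w *m Fmat g0 = w.
    by rewrite /Fmat /XSX -/X0 mulmxDr mulmx1 !mulmxA w_orth !mul0mx addr0.
  by rewrite -{1}wF -mulmxA /Fi mulmxV ?Fmat_unit // mulmx1.
have uw : bf 1%:M u w = 0.
  rewrite /bf mulmx1 /u /Pproj -/X0 -!mulmxA -trmx_mul w_orth trmx0 !mulmx0.
  by rewrite mxE.
have wu : bf 1%:M w u = 0 by rewrite bfC ?trmx1.
have vE : v = u + w by rewrite /w addrC subrK.
have vP : v *m (1%:M - Pproj X g0) = w by rewrite mulmxBr mulmx1.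
clearbody w u.
have bf_w z : bf Fi w z = bf 1%:M w z by rewrite /bf wF mulmx1.
have -> : qf (1%:M - Pproj X g0) v = nrm w.
  rewrite /qf /bf vP; have -> : (w *m v^T) 0 0 = bf 1%:M w v by rewrite /bf mulmx1.
  by rewrite vE bfDr wu add0r -nrm_bf.
have -> : qf Fi v = qf Fi u + nrm w.
  rewrite /qf vE bfDl !bfDr bf_w wu (bfC u w (invF_sym g0)) -/Fi bf_w wu bf_w.
  rewrite -nrm_bf.
  ring.
by rewrite lerDr; case/andP: (qf_invF_bounds g0 u).
Qed.

(* [X_D^T F_A^-1 X_D]: the matrix through which [D] enters once [A] is in. *)
Definition Mcond (A D : {set 'I_p}) : 'M[R]_#|D| :=
  (Xsub X D)^T *m invmx (Fmat A) *m Xsub X D.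

(* Symmetry, the form through [F_A^-1], and positivity of [Mcond A D]
   (the latter in the shape [0 * nrm <= qf] used by the determinant bound). *)
Lemma Mcond_sym A D : (Mcond A D)^T = Mcond A D.
Proof. by rewrite /Mcond !trmx_mul trmxK invF_sym mulmxA. Qed.

Lemma qf_Mcond A (D : {set 'I_p}) (y : 'rV[R]_#|D|) :
  qf (Mcond A D) y = qf (invmx (Fmat A)) (y *m (Xsub X D)^T).
Proof. by rewrite /Mcond -qf_conj trmxK. Qed.

Lemma qf_Mcond_ge0 A (D : {set 'I_p}) (y : 'rV[R]_#|D|) : 0 * nrm y <= qf (Mcond A D) y.
Proof. by rewrite mul0r qf_Mcond; case/andP: (qf_invF_bounds A (y *m (Xsub X D)^T)). Qed.

Lemma det_Fmat_add g A D : Fmat g = Fmat A + XSX D ->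
  \det (Fmat g) = \det (Fmat A) * \det (1%:M + Sig c D *m Mcond A D).
Proof.
move=> ->; have -> : Fmat A + XSX D = Fmat A *m (1%:M + invmx (Fmat A) *m XSX D).
  by rewrite mulmxDr mulmx1 mulmxA mulmxV ?Fmat_unit // mul1mx.
rewrite det_mulmx; congr (_ * _).
rewrite /XSX !mulmxA -(mulmxA (invmx (Fmat A) *m Xsub X D)).
by rewrite det_id_addmul /Mcond !mulmxA.
Qed.

(* Form bounds [a <= M <= b] give [(1 + phil a)^|D| <= det (I + Sigma_D M)
   <= (1 + phiu b)^|D|], through the symmetric [I + Sigma^1/2 M Sigma^1/2]. *)
Lemma det_id_addSig_bounds (D : {set 'I_p}) (M : 'M[R]_#|D|) a b :
    M^T = M -> 0 <= a -> 0 <= b ->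
    (forall y, a * nrm y <= qf M y) -> (forall y, qf M y <= b * nrm y) ->
  (1 + phil * a) ^+ #|D| <= \det (1%:M + Sig c D *m M) <= (1 + phiu * b) ^+ #|D|.
Proof.
move=> M_sym a_ge0 b_ge0 lo up.
rewrite -Sig_half_sqr -mulmxA det_id_addmul; set S := Sig_half c D.
have S_sym : S^T = S := Sig_half_sym D.
have S_sqr : S *m S = Sig c D := Sig_half_sqr D.
have sym : (1%:M + S *m M *m S)^T = 1%:M + S *m M *m S.
  by rewrite linearD /= trmx1 !trmx_mul S_sym M_sym mulmxA.
have qfE y : qf (1%:M + S *m M *m S) y = nrm y + qf M (y *m S).
  by rewrite qf_add qf1 -qf_conj S_sym.
have nrmS y : nrm (y *m S) = qf (Sig c D) y.
  by rewrite -qf1 -qf_conj mulmx1 S_sym S_sqr.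
apply: det_bounds sym _ _ _ => [|y|y]; rewrite ?qfE.
- by have := mulr_ge0 (ltW phil_gt0) a_ge0; lra.
- have := lo (y *m S); rewrite nrmS; case/andP: (qf_Sig y) => Slo _.
  have := ler_wpM2l a_ge0 Slo; have := nrm_ge0 y; nra.
- have := up (y *m S); rewrite nrmS; case/andP: (qf_Sig y) => _ Sup.
  have := ler_wpM2l b_ge0 Sup; have := nrm_ge0 y; nra.
Qed.

(* Part (a) in determinant form: for [g0 \subset g], the ratio
   [det W_g / det W_g0] is [det (I + Sigma_D M)] with [D = g \ g0], and
   [M >= X_D^T (I - P_g0) X_D = n Mres >= n lam]. *)
Lemma det_ratio_S1 (g g0 : {set 'I_p}) (lam : R) :
    g0 \subset g -> (Xsub X g0)^T *m Xsub X g0 \in unitmx -> 0 <= lam ->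
    (forall a, eigenvalue (Mres X g g0) a -> lam <= a) ->
  (1 + phil * (n%:R * lam)) ^+ #|g :\: g0| <= \det (Wmat X c g) / \det (Wmat X c g0).
Proof.
move=> g0g gram_unit lam_ge0 eig_lb; set D := g :\: g0.
have Fg : Fmat g = Fmat g0 + XSX D by rewrite /Fmat (XSX_split g g0) (setIidPr g0g) addrA.
rewrite !det_Wmat (det_Fmat_add Fg) mulrAC mulfV ?Fmat_det_neq0 // mul1r.
have Mres_lb := eigenvalue_lower_bound (Mres_sym X g g0) eig_lb.
have lo y : n%:R * lam * nrm y <= qf (Mcond g0 D) y.
  rewrite qf_Mcond; apply: le_trans (proj_le_invF gram_unit _).
  by rewrite qf_normalized -mulrA ler_wpM2l.
have [K K_ge0 HK] := qf_bounded (Mcond g0 D).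
have nlam_ge0 : 0 <= n%:R * lam by rewrite mulr_ge0.
by case/andP: (det_id_addSig_bounds (Mcond_sym g0 D) nlam_ge0 K_ge0 lo
  (fun y => le_trans (ler_norm _) (HK y))).
Qed.

(* Part (b) in determinant form: with [h = g :&: g0], both [F_g] and [F_g0]
   extend [F_h]; the first factor is [>= 1], the second [<= (1 + phiu n C)^k]
   since [0 <= F_h^-1 <= I] and [X_D^T X_D = n Mgram <= n C]. *)
Lemma det_ratio_S2 (g g0 : {set 'I_p}) (C : R) : 0 <= C ->
    (forall a, eigenvalue (Mgram X g g0) a -> a <= C) ->
  ((1 + phiu * (n%:R * C)) ^+ #|g0 :\: g|)^-1 <= \det (Wmat X c g) / \det (Wmat X c g0).
Proof.
move=> C_ge0 eig_ub; set h := g :&: g0; set D := g :\: g0; set D0 := g0 :\: g.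
have Fg : Fmat g = Fmat h + XSX D by rewrite /Fmat (XSX_split g g0) addrA.
have Fg0 : Fmat g0 = Fmat h + XSX D0 by rewrite /Fmat (XSX_split g0 g) setIC addrA.
rewrite !det_Wmat (det_Fmat_add Fg) (det_Fmat_add Fg0).
have [K K_ge0 HK] := qf_bounded (Mcond h D).
have /andP[d_ge1 _] := det_id_addSig_bounds (Mcond_sym h D) (lexx 0) K_ge0
  (@qf_Mcond_ge0 h D) (fun y => le_trans (ler_norm _) (HK y)).
have Mgram_ub := eigenvalue_upper_bound (Mgram_sym X g g0) eig_ub.
have up y : qf (Mcond h D0) y <= n%:R * C * nrm y.
  rewrite qf_Mcond; case/andP: (qf_invF_bounds h (y *m (Xsub X D0)^T)) => _.
  move/le_trans; apply; rewrite -qf1 qf_normalized mulmx1 -mulrA.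
  by rewrite ler_wpM2l ?ler0n.
have nC_ge0 : 0 <= n%:R * C by rewrite mulr_ge0 ?ler0n.
have /andP[d0_ge1 d0_le] := det_id_addSig_bounds (Mcond_sym h D0) (lexx 0) nC_ge0
  (@qf_Mcond_ge0 h D0) up.
rewrite !mulr0 !addr0 !expr1n in d_ge1 d0_ge1.
have Fh_gt0 : 0 < \det (Fmat h) by apply: lt_le_trans (Fmat_det_ge1 h).
rewrite invfM mulrACA mulfV ?gt_eqF // mul1r.
apply: le_trans (_ : (\det (1%:M + Sig c D0 *m Mcond h D0))^-1 <= _).
  by rewrite lef_pV2 ?posrE //; lra.
by rewrite ler_peMl ?invr_ge0 //; lra.
Qed.
End Model.

Lemma natr_INR k : (k%:R : R) = INR k.
Proof. by elim: k => [|k IH] //; rewrite mulrS IH S_INR addrC. Qed.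

Lemma exprn_pow (x : R) k : x ^+ k = pow x k.
Proof. by elim: k => [|k IH] //; rewrite exprS IH. Qed.

Lemma gram_unit_npos n p (X : 'M[R]_(n, p)) (g : {set 'I_p}) :
  (Xsub X g)^T *m Xsub X g \in unitmx -> (0 < #|g|)%N -> (0 < n)%N.
Proof.
move=> gram_unit g_gt0; case: (posnP n) => // n0; move: gram_unit.
have -> : (Xsub X g)^T *m Xsub X g = 0.
  apply/matrixP => i j; rewrite !mxE big1 // => l _.
  by have := leq_trans (ltn_ord l) (eq_leq n0).
rewrite -(scale0r (1%:M : 'M[R]_#|g|)) unitmxE unitfE detZ det1 mulr1.
by rewrite expr0n eqn0Ngt g_gt0 eqxx.
Qed.

Section Logarithms.
Local Open Scope R_scope.

Lemma ln_le (x y : R) : 0 < x -> x <= y -> ln x <= ln y.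
Proof.
move=> x_gt0 /Rle_lt_or_eq_dec [xy|<-]; last exact: Rle_refl.
exact/Rlt_le/ln_increasing.
Qed.

Lemma half_ln_pow_le (x r : R) k :
  0 < x -> x ^ k <= r -> / 2 * INR k * ln x <= / 2 * ln r.
Proof.
move=> x_gt0 xr; rewrite Rmult_assoc -ln_pow //.
by apply/Rmult_le_compat_l/ln_le => //; [Lra.lra | exact: pow_lt].
Qed.

Lemma half_ln_inv_pow_le (y r : R) m s :
  1 <= y -> / y ^ m <= r -> (m <= s)%N -> - (/ 2 * INR s * ln y) <= / 2 * ln r.
Proof.
move=> y_ge1 yr ms; have y_gt0 : 0 < y by Lra.lra.
have := ln_le (Rinv_0_lt_compat _ (pow_lt _ m y_gt0)) yr.
rewrite ln_Rinv ?ln_pow //; last exact: pow_lt.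
have ln_ge0 : 0 <= ln y by rewrite -ln_1; apply: ln_le => //; Lra.lra.
have : INR m * ln y <= INR s * ln y by apply/Rmult_le_compat_r/le_INR/ssrnat.leP.
Lra.lra.
Qed.

End Logarithms.

Section MainBounds.
Local Open Scope R_scope.
Variables (n p : nat) (X : 'M[R]_(n, p)) (c : 'I_p -> R) (phil phiu : R).
Hypothesis phil_gt0 : 0 < phil.
Hypothesis phil_le_phiu : phil <= phiu.
Hypothesis c_bounds : forall j, phil <= c j <= phiu.

Let phil_gt0' : (0 < phil)%R. Proof. exact/RltP. Qed.
Let c_bounds' j : (phil <= c j <= phiu)%R.
Proof. by case: (c_bounds j) => /RleP -> /RleP. Qed.

Lemma T2_lower_S1 (g g0 : {set 'I_p}) (C3 delta : R) : 0 < C3 ->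
    inS1 g0 g -> (forall g, ((Xsub X g)^T *m Xsub X g)%R \in unitmx) ->
    (forall a, eigenvalue (Mres X g g0) a -> C3 * Rpower (INR n) (- delta) <= a) ->
  / 2 * (INR #|g| - INR #|g0|) * ln (1 + C3 * Rpower (INR n) (1 - delta) * phil)
    <= T2 X c g g0.
Proof.
move=> C3_gt0 /andP[g0g g_neq_g0] gram_unit eig_lb.
have n_gt0 : (0 < n)%N.
  apply: (gram_unit_npos (gram_unit g)); rewrite card_gt0.
  by apply: contraNneq g_neq_g0 => g_empty; move: g0g; rewrite g_empty subset0 => /eqP ->.
set lam := C3 * Rpower (INR n) (- delta).
have lam_gt0 : 0 < lam by apply: Rmult_lt_0_compat => //; exact: exp_pos.
have nlam : INR n * lam = C3 * Rpower (INR n) (1 - delta).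
  rewrite /lam /Rminus Rplus_comm Rpower_plus Rpower_1; last exact/lt_0_INR/ssrnat.ltP.
  by rewrite Rmult_comm Rmult_assoc.
have lam_ge0 : (0 <= lam)%R by apply/RleP/Rlt_le.
have := det_ratio_S1 phil_gt0' c_bounds' g0g (gram_unit g0) lam_ge0
  (fun a => introT (RleP _ _) \o eig_lb a).
rewrite natr_INR exprn_pow -[(INR n * lam)%R]/(INR n * lam) nlam => /RleP ratio.
have -> : INR #|g| - INR #|g0| = INR #|g :\: g0|.
  by rewrite cardsD (setIidPr g0g) minus_INR //; apply/ssrnat.leP/subset_leq_card.
have x_gt0 : 0 < 1 + phil * (C3 * Rpower (INR n) (1 - delta)).
  have := Rmult_lt_0_compat _ _ phil_gt0 (Rmult_lt_0_compat _ _ C3_gt0 (exp_pos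
    ((1 - delta) * ln (INR n)))); rewrite /Rpower; Lra.lra.
by rewrite (Rmult_comm _ phil); exact: half_ln_pow_le x_gt0 ratio.
Qed.

Lemma T2_lower_S2 (g g0 : {set 'I_p}) (C2 : R) : 0 < C2 ->
    (forall a, eigenvalue (Mgram X g g0) a -> a <= C2) ->
  - (/ 2 * INR #|g0| * ln (1 + C2 * INR n * phiu)) <= T2 X c g g0.
Proof.
move=> C2_gt0 eig_ub.
have C2_ge0 : (0 <= C2)%R by apply/RleP/Rlt_le.
have := det_ratio_S2 phil_gt0' c_bounds' C2_ge0 (fun a => introT (RleP _ _) \o eig_ub a).
rewrite natr_INR exprn_pow => /RleP ratio.
have y_ge1 : 1 <= 1 + phiu * (INR n * C2).
  have := Rmult_le_pos _ _ (Rmult_le_pos _ _ (pos_INR n) (Rlt_le _ _ C2_gt0))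
    (Rle_trans _ _ _ (Rlt_le _ _ phil_gt0) phil_le_phiu); Lra.lra.
rewrite [C2 * _ * _]Rmult_comm (Rmult_comm C2).
exact: half_ln_inv_pow_le y_ge1 ratio (subset_leq_card (subsetDl g0 g)).
Qed.

End MainBounds.

Local Open Scope R_scope.

Theorem lemma2 (n p : nat) (X : 'M[R]_(n, p)) (beta0 : 'I_p -> R)
  (phil phiu : R)
  (Hphil : 0 < phil) (Hphi : phil <= phiu)
  (Hinv : forall g : {set 'I_p}, ((Xsub X g)^T *m Xsub X g)%R \in unitmx) :
  (* (a) *)
  (forall C3 delta : R, 0 < C3 -> 0 <= delta ->
    (forall g : {set 'I_p}, inS1 (gamma0 beta0) g ->
       forall a : R, eigenvalue (Mres X g (gamma0 beta0)) a ->
         C3 * Rpower (INR n) (- delta) <= a) ->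
    forall g : {set 'I_p}, inS1 (gamma0 beta0) g ->
    forall c : 'I_p -> R, (forall j, phil <= c j <= phiu) ->
      / 2 * (INR #|g| - INR #|gamma0 beta0|)
          * ln (1 + C3 * Rpower (INR n) (1 - delta) * phil)
        <= T2 X c g (gamma0 beta0))
  /\
  (* (b) *)
  (forall C2 : R, 0 < C2 -> gamma0 beta0 != set0 ->
    (forall g : {set 'I_p}, inS2 (gamma0 beta0) g ->
       forall a : R, eigenvalue (Mgram X g (gamma0 beta0)) a -> a <= C2) ->
    forall g : {set 'I_p}, inS2 (gamma0 beta0) g ->
    forall c : 'I_p -> R, (forall j, phil <= c j <= phiu) ->
      - (/ 2 * INR #|gamma0 beta0| * ln (1 + C2 * INR n * phiu))
        <= T2 X c g (gamma0 beta0)).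
Proof.
split.
- move=> C3 delta C3_gt0 _ eig_lb g gS1 c c_bounds.
  exact: (T2_lower_S1 (delta := delta) Hphil c_bounds C3_gt0 gS1 Hinv (eig_lb g gS1)).
- move=> C2 C2_gt0 _ eig_ub g gS2 c c_bounds.
  exact: (T2_lower_S2 (X := X) Hphil Hphi c_bounds C2_gt0 (eig_ub g gS2)).
Qed.
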